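(* Let $\alpha\in(0,1]$, $0\le a<b$, and let $f:[a,b]\to\mathbb{R}$ be $\alpha$-fractional differentiable with $D_\alpha f$ continuous and $m\le D_\alpha f(t)\le M$ for $t\in[a,b]$. Then $$ \left|\frac{f(b)+f(a)}{2}-\frac{\alpha}{b^\alpha-a^\alpha}\int_a^b f(s)\,d_\alpha s\right|\le\frac14\left(\frac{b^\alpha-a^\alpha}{\alpha}\right)(M-m). $$
   Context: The conformable $\alpha$-fractional derivative is $D_\alpha f(t):=\lim_{\varepsilon\to 0}\frac{f(t+\varepsilon t^{1-\alpha})-f(t)}{\varepsilon}$ for $t>0$, $D_\alpha f(0):=\lim_{t\to0^+}D_\alpha f(t)$. Integrals: $\int_a^b h(s)\,d_\alpha s:=\int_a^b h(s)s^{\alpha-1}\,ds$.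
   Formalization: f is also assumed continuous on [a,b]; for t>0 this follows from α-fractional differentiability, so it adds only continuity of f at 0 when a = 0. Apart from conventions, each condition added here is assumed in the paper as well or is needed for the statement above to hold. *)

From Stdlib Require Import Reals.
From Coquelicot Require Import Coquelicot.
Open Scope R_scope.

(* Real power x^y for y > 0 with the convention 0^y = 0
   (Stdlib's Rpower 0 y = 1, which is wrong for our purposes). *)
Definition rpow (x y : R) : R := if Rlt_dec 0 x then Rpower x y else 0.

(* The conformable alpha-derivative of f at t > 0 equals l:
   lim_{eps -> 0} (f (t + eps t^(1-alpha)) - f t) / eps = l,
   where the limit only uses points t + eps t^(1-alpha) in the domain [a,b]
   (one-sided at the endpoints). *)
Definition conf_lim (alpha a b : R) (f : R -> R) (t l : R) : Prop :=
  filterlim (fun eps => (f (t + eps * rpow t (1 - alpha)) - f t) / eps)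
    (within (fun eps => eps <> 0 /\ a <= t + eps * rpow t (1 - alpha) <= b)
       (locally 0))
    (locally l).

Definition is_conf_deriv_on (alpha a b : R) (f D : R -> R) : Prop :=
  (forall t, a <= t <= b -> 0 < t -> conf_lim alpha a b f t (D t)) /\
  (a = 0 -> filterlim D (at_right 0) (locally (D 0))).

Definition cont_on (a b : R) (g : R -> R) : Prop :=
  forall t, a <= t <= b ->
    filterlim g (within (fun s => a <= s <= b) (locally t)) (locally (g t)).

From Stdlib Require Import Reals Lra.
From Coquelicot Require Import Coquelicot.
Open Scope R_scope.

(* The substitution u = phi(t) = t^alpha / alpha turns the alpha-integral
   into the ordinary integral of g = f o phi^-1 over [A, B] = [phi a, phi b],
   and the bound m <= D_alpha f <= M into slope bounds m <= g' <= M (Cauchy's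
   mean value theorem applied to f and phi). The estimate is then the
   classical one for the trapezoid rule: g stays within (M - m)(B - A)/4 of
   the line of slope (m + M)/2 through the mean of its endpoint values, and
   that line integrates to the trapezoid value. *)

Lemma ball_R (x e y : R) : ball x e y <-> Rabs (y - x) < e.
Proof. reflexivity. Qed.

Lemma rpow_Rpower x y : 0 < x -> rpow x y = Rpower x y.
Proof. intro Hx; unfold rpow; destruct (Rlt_dec 0 x); [reflexivity | lra]. Qed.

Lemma rpow_nonpos x y : x <= 0 -> rpow x y = 0.
Proof. intro Hx; unfold rpow; destruct (Rlt_dec 0 x); [lra | reflexivity]. Qed.

Lemma rpow_gt0 x y : 0 < x -> 0 < rpow x y.
Proof. intro Hx; rewrite rpow_Rpower by lra; apply exp_pos. Qed.

Lemma rpow_ge0 x y : 0 <= rpow x y.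
Proof.
  destruct (Rlt_dec 0 x) as [Hx | Hx].
  - left; apply rpow_gt0, Hx.
  - rewrite rpow_nonpos by lra; lra.
Qed.

Lemma rpow_lt_rpow p x y : 0 < p -> 0 <= x < y -> rpow x p < rpow y p.
Proof.
  intros Hp [Hx Hxy]. destruct (Req_dec x 0) as [-> | Hx0].
  - rewrite rpow_nonpos by lra. apply rpow_gt0; lra.
  - rewrite !rpow_Rpower by lra. apply Rlt_Rpower_l; lra.
Qed.

Lemma rpow_le_rpow p x y : 0 < p -> 0 <= x <= y -> rpow x p <= rpow y p.
Proof.
  intros Hp Hxy. destruct (Req_dec x y) as [-> | Hne]; [lra |].
  left; apply rpow_lt_rpow; lra.
Qed.

Lemma rpow_rpow_inv u p q : 0 <= u -> 0 < p -> p * q = 1 -> rpow (rpow u p) q = u.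
Proof.
  intros Hu Hp Hpq. destruct (Req_dec u 0) as [-> | Hu0].
  - rewrite (rpow_nonpos 0 p), rpow_nonpos by lra; reflexivity.
  - rewrite (rpow_Rpower u), rpow_Rpower by (first [apply exp_pos | lra]).
    rewrite Rpower_mult, Hpq. apply Rpower_1; lra.
Qed.

Lemma is_derive_rpow p t : 0 < t -> is_derive (fun s => rpow s p) t (p * rpow t (p - 1)).
Proof.
  intro Ht. rewrite rpow_Rpower by lra.
  apply is_derive_ext_loc with (fun s => Rpower s p).
  - exists (mkposreal t Ht). intros s Hs. apply ball_R in Hs.
    change (Rabs (s - t) < t) in Hs. apply Rabs_def2 in Hs.
    symmetry; apply rpow_Rpower; lra.
  - apply is_derive_Reals, derivable_pt_lim_power, Ht.
Qed.

Lemma continuous_rpow p t : 0 < p -> 0 <= t -> continuous (fun s => rpow s p) t.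
Proof.
  intros Hp Ht. destruct (Req_dec t 0) as [-> | Ht0].
  - apply continuity_pt_filterlim. intros e He. exists (rpow e (/ p)). split.
    { apply rpow_gt0; lra. }
    intros x [_ Hx]. simpl in *. unfold R_dist in *.
    rewrite (rpow_nonpos 0), Rminus_0_r in * by lra.
    destruct (Rle_dec x 0) as [Hx0 | Hx0].
    + rewrite rpow_nonpos, Rabs_R0 by lra; lra.
    + rewrite Rabs_pos_eq by apply rpow_ge0. rewrite Rabs_pos_eq in Hx by lra.
      assert (Hq : 0 < / p) by (apply Rinv_0_lt_compat; lra).
      rewrite <- (rpow_rpow_inv e (/ p) p) by (try apply Rinv_l; lra).
      apply rpow_lt_rpow; lra.
  - apply (ex_derive_continuous (K := R_AbsRing) (V := R_NormedModule)).
    eexists; apply is_derive_rpow; lra.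
Qed.

(* With eps = h / t^(1-alpha), the conformable quotient at eps is t^(1-alpha)
   times the ordinary difference quotient at h. *)
Lemma is_derive_of_conf_lim alpha a b f t l :
  a < t < b -> 0 < t -> conf_lim alpha a b f t l ->
  is_derive f t (l * rpow t (alpha - 1)).
Proof.
  intros Ht Ht0 Hlim. set (c := rpow t (1 - alpha)).
  assert (Hc : 0 < c) by (apply rpow_gt0; lra).
  assert (Hinv : rpow t (alpha - 1) = / c).
  { unfold c; rewrite !rpow_Rpower by lra.
    replace (alpha - 1) with (- (1 - alpha)) by ring. apply Rpower_Ropp. }
  rewrite Hinv. apply is_derive_Reals. intros e He.
  assert (Hec : 0 < e * c) by (apply Rmult_lt_0_compat; lra).
  apply filterlim_locally with (eps := mkposreal _ Hec) in Hlim.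
  destruct Hlim as [[d Hd] Hball]. simpl in Hball.
  assert (Hdel : 0 < Rmin (d * c) (Rmin (t - a) (b - t))).
  { repeat apply Rmin_pos; try lra. apply Rmult_lt_0_compat; lra. }
  exists (mkposreal _ Hdel). intros h Hh0 Hh. simpl in Hh.
  pose proof (Rmin_l (d * c) (Rmin (t - a) (b - t))).
  pose proof (Rmin_r (d * c) (Rmin (t - a) (b - t))).
  pose proof (Rmin_l (t - a) (b - t)). pose proof (Rmin_r (t - a) (b - t)).
  pose proof (Rabs_def2 _ _ Hh).
  specialize (Hball (h / c)). fold c in Hball.
  replace (t + h / c * c) with (t + h) in Hball by (field; lra).
  assert (Hhc : Rabs (h / c) < d).
  { unfold Rdiv. rewrite Rabs_mult, Rabs_inv, (Rabs_pos_eq c) by lra.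
    apply Rmult_lt_reg_r with c; [lra |].
    rewrite Rmult_assoc, Rinv_l by lra. lra. }
  assert (Hdom : h / c <> 0 /\ a <= t + h <= b).
  { split; [| lra]. unfold Rdiv. apply Rmult_integral_contrapositive.
    split; [lra | apply Rinv_neq_0_compat; lra]. }
  assert (Hhc0 : ball 0 d (h / c)) by (apply ball_R; rewrite Rminus_0_r; exact Hhc).
  assert (Hq := Hball Hhc0 Hdom).
  change (Rabs ((f (t + h) - f t) / (h / c) - l) < e * c) in Hq.
  replace ((f (t + h) - f t) / h - l * / c) with (((f (t + h) - f t) / (h / c) - l) / c)
    by (field; lra).
  unfold Rdiv at 1. rewrite Rabs_mult, Rabs_inv, (Rabs_pos_eq c) by lra.
  apply Rmult_lt_reg_r with c; [lra |].
  rewrite Rmult_assoc, Rinv_l, Rmult_1_r by lra. exact Hq.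
Qed.

Definition clamp (lo hi x : R) : R := Rmax lo (Rmin hi x).

Lemma clamp_in lo hi x : lo <= hi -> lo <= clamp lo hi x <= hi.
Proof. intros; unfold clamp, Rmax, Rmin; repeat destruct Rle_dec; lra. Qed.

Lemma clamp_id lo hi x : lo <= x <= hi -> clamp lo hi x = x.
Proof. intros; unfold clamp, Rmax, Rmin; repeat destruct Rle_dec; lra. Qed.

Lemma clamp_lipschitz lo hi x y :
  lo <= hi -> Rabs (clamp lo hi x - clamp lo hi y) <= Rabs (x - y).
Proof. intros; unfold clamp, Rmax, Rmin; repeat destruct Rle_dec; split_Rabs; lra. Qed.

Lemma continuity_pt_clamp_comp a b f z :
  a <= b -> cont_on a b f -> continuity_pt (fun t => f (clamp a b t)) z.
Proof.
  intros Hab Hf e He.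
  assert (Hz := clamp_in a b z Hab).
  specialize (Hf _ Hz). apply filterlim_locally with (eps := mkposreal e He) in Hf.
  destruct Hf as [[d Hd] Hball]. exists d; split; [exact Hd |].
  intros x [_ Hx]. simpl in *. unfold R_dist in *.
  pose proof (clamp_lipschitz a b x z Hab).
  apply (Hball (clamp a b x)); [apply ball_R; lra | apply clamp_in, Hab].
Qed.

(* MVT_gen needs continuity on all of R, hence the clamped extension of [f]. *)
Lemma increment_bounds_of_derive_bounds a b (f g df dg : R -> R) m M :
  a <= b -> cont_on a b f -> (forall t, a <= t <= b -> continuous g t) ->
  (forall t, a < t < b -> is_derive f t (df t)) ->
  (forall t, a < t < b -> is_derive g t (dg t)) ->
  (forall t, a <= t <= b -> m * dg t <= df t <= M * dg t) ->
  forall x y, a <= x <= y -> y <= b ->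
  m * (g y - g x) <= f y - f x <= M * (g y - g x).
Proof.
  intros Hab Hf Hg Hdf Hdg Hbnd x y Hx Hy.
  assert (Hmvt : forall c, exists xi, x <= xi <= y /\
    f y - f x - c * (g y - g x) = (df xi - c * dg xi) * (y - x)).
  { intro c.
    destruct (MVT_gen (fun t => f (clamp a b t) - c * g t) x y
                (fun t => df t - c * dg t)) as [xi [Hxi E]].
    - intros t Ht. rewrite Rmin_left, Rmax_right in Ht by lra.
      apply (is_derive_minus (fun t => f (clamp a b t)) (fun t => c * g t)).
      + apply is_derive_ext_loc with f; [| apply Hdf; lra].
        assert (Hr : 0 < Rmin (t - a) (b - t)) by (apply Rmin_pos; lra).
        exists (mkposreal _ Hr). intros s Hs. apply ball_R in Hs.
        change (Rabs (s - t) < Rmin (t - a) (b - t)) in Hs.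
        pose proof (Rmin_l (t - a) (b - t)). pose proof (Rmin_r (t - a) (b - t)).
        apply Rabs_def2 in Hs. rewrite clamp_id by lra. reflexivity.
      + apply (is_derive_scal g), Hdg; lra.
    - intros t Ht. rewrite Rmin_left, Rmax_right in Ht by lra.
      apply continuity_pt_minus; [apply continuity_pt_clamp_comp; assumption |].
      apply continuity_pt_scal, continuity_pt_filterlim, Hg; lra.
    - rewrite Rmin_left, Rmax_right in Hxi by lra. exists xi. split; [exact Hxi |].
      rewrite !clamp_id in E by lra. lra. }
  destruct (Hmvt m) as [xi [Hxi Em]]. destruct (Hmvt M) as [xi' [Hxi' EM]].
  pose proof (Hbnd xi ltac:(lra)). pose proof (Hbnd xi' ltac:(lra)).
  split; nra.
Qed.

Section FractionalSubstitution.

Variable alpha : R.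
Hypothesis alpha_gt0 : 0 < alpha.

Definition phi (t : R) : R := rpow t alpha / alpha.
Definition psi (u : R) : R := rpow (alpha * u) (/ alpha).

Lemma phi_ge0 t : 0 <= phi t.
Proof.
  unfold phi, Rdiv. apply Rmult_le_pos; [apply rpow_ge0 |].
  left; apply Rinv_0_lt_compat, alpha_gt0.
Qed.

Lemma phi_lt_phi x y : 0 <= x < y -> phi x < phi y.
Proof.
  intro Hxy. unfold phi, Rdiv. apply Rmult_lt_compat_r.
  - apply Rinv_0_lt_compat, alpha_gt0.
  - apply rpow_lt_rpow; assumption.
Qed.

Lemma phi_le_phi x y : 0 <= x <= y -> phi x <= phi y.
Proof.
  intro Hxy. unfold phi, Rdiv. apply Rmult_le_compat_r.
  - left; apply Rinv_0_lt_compat, alpha_gt0.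
  - apply rpow_le_rpow; assumption.
Qed.

Lemma psi_phi t : 0 <= t -> psi (phi t) = t.
Proof.
  intro Ht. unfold psi, phi.
  replace (alpha * (rpow t alpha / alpha)) with (rpow t alpha) by (field; lra).
  apply rpow_rpow_inv; [exact Ht | exact alpha_gt0 | field; lra].
Qed.

Lemma phi_psi u : 0 <= u -> phi (psi u) = u.
Proof.
  intro Hu. unfold psi, phi.
  assert (Hinv : 0 < / alpha) by (apply Rinv_0_lt_compat, alpha_gt0).
  rewrite rpow_rpow_inv; [field; lra | apply Rmult_le_pos; lra | exact Hinv |].
  apply Rinv_l; lra.
Qed.

Lemma psi_le_psi u v : 0 <= u <= v -> psi u <= psi v.
Proof.
  intro Huv. apply rpow_le_rpow; [apply Rinv_0_lt_compat, alpha_gt0 |].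
  split; [apply Rmult_le_pos |]; try apply Rmult_le_compat_l; lra.
Qed.

Lemma is_derive_phi t : 0 < t -> is_derive phi t (rpow t (alpha - 1)).
Proof.
  intro Ht. unfold phi.
  replace (rpow t (alpha - 1)) with (/ alpha * (alpha * rpow t (alpha - 1))) by (field; lra).
  apply (is_derive_ext (fun s => / alpha * rpow s alpha)).
  { intro s; simpl; unfold Rdiv; ring. }
  apply (is_derive_scal (fun s => rpow s alpha)), is_derive_rpow, Ht.
Qed.

Lemma continuous_phi t : 0 <= t -> continuous phi t.
Proof.
  intro Ht. apply (continuous_ext (fun s => scal (/ alpha) (rpow s alpha))).
  { intro s; unfold phi, scal; simpl; unfold mult; simpl; unfold Rdiv; ring. }
  apply (continuous_scal_r (K := R_AbsRing) (V := R_NormedModule)).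
  apply continuous_rpow; assumption.
Qed.

End FractionalSubstitution.

Lemma conf_increment_bounds alpha a b f D m M :
  0 < alpha -> 0 <= a <= b ->
  is_conf_deriv_on alpha a b f D -> cont_on a b f ->
  (forall t, a <= t <= b -> m <= D t <= M) ->
  forall x y, a <= x <= y -> y <= b ->
  m * (phi alpha y - phi alpha x) <= f y - f x <= M * (phi alpha y - phi alpha x).
Proof.
  intros Ha Hab [HD _] Hf Hbnd.
  apply (increment_bounds_of_derive_bounds a b f (phi alpha)
           (fun t => D t * rpow t (alpha - 1)) (fun t => rpow t (alpha - 1))); try lra.
  - exact Hf.
  - intros t Ht; apply continuous_phi; lra.
  - intros t Ht. apply (is_derive_of_conf_lim alpha a b); try lra. apply HD; lra.
  - intros t Ht. apply is_derive_phi; lra.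
  - intros t Ht. pose proof (rpow_ge0 t (alpha - 1)). pose proof (Hbnd t Ht). nra.
Qed.

Lemma subst_increment_bounds alpha a b f D m M :
  0 < alpha -> 0 <= a <= b ->
  is_conf_deriv_on alpha a b f D -> cont_on a b f ->
  (forall t, a <= t <= b -> m <= D t <= M) ->
  forall u v, phi alpha a <= u <= v -> v <= phi alpha b ->
  m * (v - u) <= f (psi alpha v) - f (psi alpha u) <= M * (v - u).
Proof.
  intros Ha Hab HD Hf Hbnd u v Huv Hv.
  pose proof (phi_ge0 alpha Ha a).
  assert (Hpsi : a <= psi alpha u <= psi alpha v /\ psi alpha v <= b).
  { rewrite <- (psi_phi alpha Ha a), <- (psi_phi alpha Ha b) by lra.
    repeat split; apply psi_le_psi; lra. }
  pose proof (conf_increment_bounds alpha a b f D m M Ha Hab HD Hf Hbnd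
                (psi alpha u) (psi alpha v) (proj1 Hpsi) (proj2 Hpsi)) as Hinc.
  rewrite !phi_psi in Hinc by lra. exact Hinc.
Qed.

Lemma continuous_of_lipschitz (g : R -> R) L :
  (forall u v, Rabs (g v - g u) <= L * Rabs (v - u)) -> forall z, continuous g z.
Proof.
  intros Hg z. apply continuity_pt_filterlim. intros e He.
  assert (HL : 0 <= Rabs L) by apply Rabs_pos.
  exists (e / (Rabs L + 1)). split; [apply Rdiv_lt_0_compat; lra |].
  intros x [_ Hx]. simpl in *. unfold R_dist in *.
  apply Rle_lt_trans with ((Rabs L + 1) * Rabs (x - z)).
  - eapply Rle_trans; [apply Hg |]. apply Rmult_le_compat_r; [apply Rabs_pos |].
    pose proof (Rle_abs L); lra.
  - apply Rmult_lt_reg_l with (/ (Rabs L + 1)); [apply Rinv_0_lt_compat; lra |].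
    rewrite <- Rmult_assoc, Rinv_l, Rmult_1_l by lra.
    replace (/ (Rabs L + 1) * e) with (e / (Rabs L + 1)) by (unfold Rdiv; ring). exact Hx.
Qed.

Section IncrementBounds.

Variables (g : R -> R) (A B m M : R).
Hypothesis A_le_B : A <= B.
Hypothesis increment_bounds :
  forall u v, A <= u <= v -> v <= B -> m * (v - u) <= g v - g u <= M * (v - u).

Lemma lipschitz_clamp_comp u v :
  Rabs (g (clamp A B v) - g (clamp A B u)) <= (Rabs m + Rabs M) * Rabs (v - u).
Proof.
  pose proof (clamp_lipschitz A B v u A_le_B) as Hclamp.
  pose proof (clamp_in A B u A_le_B) as Hu. pose proof (clamp_in A B v A_le_B) as Hv.
  pose proof (Rabs_pos m) as Hm. pose proof (Rabs_pos M) as HM.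
  apply Rle_trans with ((Rabs m + Rabs M) * Rabs (clamp A B v - clamp A B u));
    [| apply Rmult_le_compat_l; lra].
  set (u' := clamp A B u) in *. set (v' := clamp A B v) in *.
  destruct (Rle_dec u' v') as [Huv | Huv].
  - destruct (increment_bounds u' v') as [H1 H2]; try lra.
    rewrite (Rabs_pos_eq (v' - u')) by lra.
    apply Rabs_le; split_Rabs; nra.
  - destruct (increment_bounds v' u') as [H1 H2]; try lra.
    rewrite (Rabs_minus_sym (g v')), (Rabs_minus_sym v'), (Rabs_pos_eq (u' - v')) by lra.
    apply Rabs_le; split_Rabs; nra.
Qed.

(* g is squeezed between the lines of slopes m and M through each endpoint. *)
Lemma midslope_line_deviation u : A <= u <= B ->
  Rabs ((g A + g B) / 2 + (m + M) / 2 * (u - (A + B) / 2) - g u)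
    <= (M - m) * (B - A) / 4.
Proof.
  intro Hu.
  destruct (increment_bounds A u) as [H1 H2]; try lra.
  destruct (increment_bounds u B) as [H3 H4]; try lra.
  apply Rabs_le; split; nra.
Qed.

Lemma trapezoid_error_bound :
  ex_RInt g A B ->
  Rabs ((g A + g B) / 2 * (B - A) - RInt g A B) <= (M - m) * (B - A) ^ 2 / 4.
Proof.
  intro Hex.
  set (P := (g A + g B) / 2). set (c := (m + M) / 2). set (Q := (A + B) / 2).
  set (F := fun u => P * u + c * (u - Q) ^ 2 / 2).
  assert (Hline : is_RInt (fun u => P + c * (u - Q)) A B (P * (B - A))).
  { replace (P * (B - A)) with (minus (F B) (F A))
      by (unfold F, Q, minus, plus, opp; simpl; field).
    apply (is_RInt_derive F).
    - intros x _. unfold F. auto_derive; [exact I | field].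
    - intros x _. apply continuity_pt_filterlim. reg. }
  assert (Herr := is_RInt_minus _ _ _ _ _ _ Hline (RInt_correct _ _ _ Hex)).
  pose proof (abs_RInt_le_const _ A B _ A_le_B (ex_intro _ _ Herr) midslope_line_deviation)
    as Hbound.
  erewrite is_RInt_unique in Hbound by exact Herr.
  unfold minus, plus, opp in Hbound; simpl in Hbound.
  replace ((M - m) * (B - A) ^ 2 / 4) with ((B - A) * ((M - m) * (B - A) / 4)) by field.
  exact Hbound.
Qed.

End IncrementBounds.

Lemma continuous_RInt_lower_bound (g : R -> R) b a :
  (forall u, continuous g u) -> continuous (fun u => RInt g u b) a.
Proof.
  intro Hg.
  assert (Hex : forall u v, ex_RInt g u v)
    by (intros; apply (@ex_RInt_continuous R_CompleteNormedModule); intros; apply Hg).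
  apply (continuous_ext (fun u => opp (RInt g b u))); [intro u; apply opp_RInt_swap, Hex |].
  apply (continuous_opp (K := R_AbsRing) (V := R_NormedModule) (fun u => RInt g b u)).
  apply (continuous_RInt_1 g b a).
  apply filter_forall; intro u. apply (@RInt_correct R_CompleteNormedModule), Hex.
Qed.

(* The weight s^(alpha-1) is phi'(s); it is unbounded near a = 0, hence the
   improper integral. *)
Lemma is_RInt_gen_subst_phi alpha a b (f g : R -> R) :
  0 < alpha -> 0 <= a < b -> (forall u, continuous g u) ->
  (forall s, a < s <= b -> f s = g (phi alpha s)) ->
  is_RInt_gen (fun s => f s * rpow s (alpha - 1)) (at_right a) (at_point b)
    (RInt g (phi alpha a) (phi alpha b)).
Proof.
  intros Ha Hab Hg Hfg.
  apply (filterlimi_lim_ext_loc (fun st => RInt g (phi alpha (fst st)) (phi alpha b))).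
  - apply (Filter_prod _ _ _ (fun s => a < s < b) (fun t => t = b)).
    + assert (Hr : 0 < b - a) by lra. exists (mkposreal _ Hr). intros s Hs Has.
      apply ball_R in Hs. change (Rabs (s - a) < b - a) in Hs. apply Rabs_def2 in Hs. lra.
    + reflexivity.
    + intros s t Hs ->. simpl.
      apply (is_RInt_ext (fun y => scal (rpow y (alpha - 1)) (g (phi alpha y)))).
      { intros y Hy. rewrite Rmin_left, Rmax_right in Hy by lra.
        rewrite Hfg by lra. unfold scal; simpl; unfold mult; simpl. ring. }
      apply (is_RInt_comp (V := R_CompleteNormedModule)); [intros; apply Hg |].
      intros y Hy. rewrite Rmin_left, Rmax_right in Hy by lra. split.
      * apply is_derive_phi; lra.
      * apply (ex_derive_continuous (K := R_AbsRing) (V := R_NormedModule)).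
        eexists; apply is_derive_rpow; lra.
  - apply (filterlim_comp _ _ _ fst (fun s => RInt g (phi alpha s) (phi alpha b)) _
             (at_right a)); [apply filterlim_fst |].
    apply (filterlim_comp _ _ _ (phi alpha) (fun u => RInt g u (phi alpha b)) _
             (locally (phi alpha a))).
    + eapply filterlim_filter_le_1; [apply filter_le_within |].
      apply continuous_phi; lra.
    + apply continuous_RInt_lower_bound, Hg.
Qed.

Lemma subst_continuous_extension alpha a b f D m M :
  0 < alpha -> 0 <= a < b ->
  is_conf_deriv_on alpha a b f D -> cont_on a b f ->
  (forall t, a <= t <= b -> m <= D t <= M) ->
  exists g : R -> R,
    (forall u, continuous g u) /\
    (forall u v, phi alpha a <= u <= v -> v <= phi alpha b ->
       m * (v - u) <= g v - g u <= M * (v - u)) /\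
    (forall t, a <= t <= b -> g (phi alpha t) = f t).
Proof.
  intros Ha Hab HD Hf Hbnd.
  set (A := phi alpha a). set (B := phi alpha b).
  assert (HAB : A < B) by (apply phi_lt_phi; lra).
  assert (Hinc := subst_increment_bounds alpha a b f D m M Ha ltac:(lra) HD Hf Hbnd).
  exists (fun u => f (psi alpha (clamp A B u))). split; [| split].
  - apply (continuous_of_lipschitz _ (Rabs m + Rabs M)).
    apply (lipschitz_clamp_comp (fun u => f (psi alpha u))); [lra | exact Hinc].
  - intros u v Huv Hv. rewrite !clamp_id by lra. apply Hinc; assumption.
  - intros t Ht. assert (A <= phi alpha t <= B) by (split; apply phi_le_phi; lra).
    rewrite clamp_id, psi_phi by lra. reflexivity.
Qed.

Theorem mainTheorem19 :
  forall (alpha a b : R) (f D : R -> R) (m M : R),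
    0 < alpha <= 1 ->
    0 <= a < b ->
    is_conf_deriv_on alpha a b f D ->
    cont_on a b D ->
    cont_on a b f ->
    (forall t, a <= t <= b -> m <= D t <= M) ->
    exists I : R,
      is_RInt_gen (fun s => f s * rpow s (alpha - 1)) (at_right a) (at_point b) I /\
      Rabs ((f b + f a) / 2 - alpha / (rpow b alpha - rpow a alpha) * I)
        <= / 4 * ((rpow b alpha - rpow a alpha) / alpha) * (M - m).
Proof.
  intros alpha a b f D m M [Ha _] Hab HD _ Hf Hbnd.
  destruct (subst_continuous_extension alpha a b f D m M Ha Hab HD Hf Hbnd)
    as [g [Hg [Hinc Hphi]]].
  set (A := phi alpha a) in *. set (B := phi alpha b) in *.
  assert (HS : 0 < B - A)
    by (pose proof (phi_lt_phi alpha Ha a b ltac:(lra)); unfold A, B; lra).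
  assert (Hex : ex_RInt g A B)
    by (apply (@ex_RInt_continuous R_CompleteNormedModule); intros; apply Hg).
  exists (RInt g A B). split.
  - apply is_RInt_gen_subst_phi; try lra; auto.
    intros s Hs. symmetry. apply Hphi. lra.
  - pose proof (trapezoid_error_bound g A B m M ltac:(lra) Hinc Hex) as Htrap.
    assert (HgA : g A = f a) by (apply Hphi; lra).
    assert (HgB : g B = f b) by (apply Hphi; lra).
    rewrite HgA, HgB in Htrap.
    replace (rpow b alpha - rpow a alpha) with (alpha * (B - A))
      by (unfold B, A, phi; field; lra).
    replace ((f b + f a) / 2 - alpha / (alpha * (B - A)) * RInt g A B)
      with (((f a + f b) / 2 * (B - A) - RInt g A B) * / (B - A)) by (field; lra).
    replace (/ 4 * (alpha * (B - A) / alpha) * (M - m))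
      with ((M - m) * (B - A) ^ 2 / 4 * / (B - A)) by (field; lra).
    assert (HSinv : 0 < / (B - A)) by (apply Rinv_0_lt_compat, HS).
    rewrite Rabs_mult, (Rabs_pos_eq (/ (B - A))) by lra.
    apply Rmult_le_compat_r; [lra | exact Htrap].
Qed.
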